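(* Consider quantitative group testing with $n$ items, each independently defective with probability $\gamma$ (the prevalence), where the test matrix $\boldsymbol{A}$ is the adjacency (parity-check) matrix of a regular $(d_\mathsf{v},d_\mathsf{c})$ bipartite graph (each item/variable node (VN) participates in $d_\mathsf{v}$ tests/constraint nodes (CNs), each test contains $d_\mathsf{c}$ items), and each test returns the exact number of defective items it contains. Decode with the following peeling decoder: initially all items are unresolved and each CN $\mathsf{c}_i$ holds its test result $s_i$; at each iteration, for every CN $\mathsf{c}_i$ of the residual graph with current residual degree $d^{(\ell)}_{\mathsf{c}_i}$ and residual syndrome $s_i^{(\ell)}$: if $s_i^{(\ell)}=0$, all its connected VNs are declared non-defective and their edges are removed; if $s_i^{(\ell)}=d^{(\ell)}_{\mathsf{c}_i}$, all its connected VNs are declared defective, $1$ is subtracted from the residual syndrome of each of their neighboring CNs, and their edges are removed; decoding stops when the residual graph is empty or no edge is removed in an iteration. Let $p_0^{(\ell)}$ (resp. $p_1^{(\ell)}$) be the probability that a message from a non-defective (resp. defective) VN to a CN at iteration $\ell$ is unresolved, and let $q_0^{(\ell)}$ (resp. $q_1^{(\ell)}$) be the probability that a message from a CN to a non-defective (resp. defective) VN at iteration $\ell$ is resolved. Then these quantities are given by the density evolution equations \begin{align*} q^{(\ell)}_0&=\sum_{i=0}^{d_\mathsf{c}-1}\binom{d_\mathsf{c}-1}{i}\gamma^i(1-\gamma)^{d_\mathsf{c}-1-i}\left(1-p^{(\ell-1)}_1\right)^i,\\ q^{(\ell)}_1&=\sum_{i=0}^{d_\mathsf{c}-1}\binom{d_\mathsf{c}-1}{i}\gamma^i(1-\gamma)^{d_\mathsf{c}-1-i}\left(1-p^{(\ell-1)}_0\right)^{d_\mathsf{c}-1-i},\\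 p^{(\ell)}_0&=\left(1-q^{(\ell-1)}_0\right)^{d_\mathsf{v}-1},\\ p^{(\ell)}_1&=\left(1-q^{(\ell-1)}_1\right)^{d_\mathsf{v}-1}. \end{align*}
   Context: Items are represented by $\boldsymbol{x}\in\{0,1\}^n$ with $x_j=1$ iff item $j$ is defective; the $m\times n$ test matrix $\boldsymbol{A}=(a_{i,j})$ has $a_{i,j}=1$ iff item $j$ is in test $i$, and the syndrome is $s_i=\sum_j x_j a_{i,j}$. The bipartite graph has an edge between VN $j$ and CN $i$ iff $a_{i,j}=1$. Density evolution refers to the standard asymptotic (large $n$, random regular graph) analysis of message-passing/peeling decoding, in which the messages along edges are tracked as probabilities; a message on an edge is ''resolved'' when the corresponding item has been identified by the decoder. *)

(* Density evolution for the peeling decoder of quantitative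
   group testing, modelled on the tree-like computation graph of a
   (dv,dc)-regular bipartite graph with i.i.d. Bernoulli(gamma) items. *)
From HB Require Import structures.
From mathcomp Require Import all_boot all_order all_algebra.
Set Implicit Arguments. Unset Strict Implicit. Unset Printing Implicit Defensive.
Import Order.TTheory GRing.Theory Num.Theory.
Local Open Scope ring_scope.

Section DE.
Variables (dv dc : nat).

(* (VC l).1 : configuration of the computation tree of a VN->CN message at
              iteration l: the state of the emitting VN together with the
              configurations of the dv-1 CN->VN messages at iteration l-1
              it receives from its other CNs.
   (VC l).2 : configuration of the computation tree of a CN->VN message at
              iteration l, excluding the receiving VN: the configurations of
              the dc-1 VN->CN messages at iteration l-1 from the other VNs. *)
Fixpoint VC (l : nat) : finType * finType :=
  match l with
  | 0 => (bool : finType, unit : finType)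
  | l'.+1 => (((bool * {ffun 'I_dv.-1 -> (VC l').2})%type : finType),
              ({ffun 'I_dc.-1 -> (VC l').1} : finType))
  end.

Definition xval (l : nat) : (VC l).1 -> bool :=
  match l return (VC l).1 -> bool with
  | 0 => fun b => b
  | _.+1 => fun t => t.1
  end.

(* msgs l = (vunres, cres):
   vunres t    : the VN->CN message at iteration l is unresolved;
   cres xv g   : the CN->VN message at iteration l is resolved, where xv is
                 the status of the receiving VN.
   Peeling rule at a CN: with U the set of other neighbours whose messages
   are still unresolved, residual syndrome s = xv + #(defective in U),
   residual degree d = 1 + #U; the CN resolves its VNs iff s = 0 or s = d. *)
Fixpoint msgs (l : nat) : ((VC l).1 -> bool) * (bool -> (VC l).2 -> bool) :=
  match l return ((VC l).1 -> bool) * (bool -> (VC l).2 -> bool) with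
  | 0 => (fun _ => true, fun _ _ => false)
  | l'.+1 =>
      let vu := (msgs l').1 in
      let cr := (msgs l').2 in
      (fun t : (VC l'.+1).1 => [forall i, ~~ cr t.1 (t.2 i)],
       fun (xv : bool) (g : (VC l'.+1).2) =>
         let U := [set i | vu (g i)] in
         let s := (nat_of_bool xv + #|[set i in U | xval (g i)]|)%N in
         let d := (1 + #|U|)%N in
         (s == 0)%N || (s == d))
  end.

Definition vunres l := (msgs l).1.
Definition cres l := (msgs l).2.

Variable R : realFieldType.
Variable gamma : R.

Definition bw (b : bool) : R := if b then gamma else 1 - gamma.

Fixpoint wts (l : nat) : ((VC l).1 -> R) * ((VC l).2 -> R) :=
  match l return ((VC l).1 -> R) * ((VC l).2 -> R) with
  | 0 => (bw, fun _ => 1)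
  | l'.+1 => (fun t : (VC l'.+1).1 => bw t.1 * \prod_i (wts l').2 (t.2 i),
              fun g : (VC l'.+1).2 => \prod_i (wts l').1 (g i))
  end.

Definition wV l := (wts l).1.
Definition wC l := (wts l).2.

Definition p_DE (b : bool) (l : nat) : R :=
  (\sum_(t : (VC l).1 | (xval t == b) && vunres t) wV t) /
  (\sum_(t : (VC l).1 | xval t == b) wV t).

Definition q_DE (b : bool) (l : nat) : R :=
  \sum_(g : (VC l).2 | cres b g) wC g.

End DE.

(* The computation trees of iteration l are finite product spaces with product
   (i.i.d.) weights, and both resolution events factor over the subtrees: a VN
   message stays unresolved iff none of its dv-1 incoming CN messages resolved
   it, and a CN resolves its message to a VN of status b iff every other
   still-unresolved neighbour also has status b (only then is the residual
   syndrome 0 or the residual degree).  Distributing sums over products gives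
   p_b = (1 - q_b)^(dv-1) and q_b = (1 - P[x = ~b] p_~b)^(dc-1), and the
   binomial theorem expands the latter into the stated sums. *)

From HB Require Import structures.
From mathcomp Require Import all_boot all_order all_algebra.
From mathcomp Require Import ring.
Set Implicit Arguments. Unset Strict Implicit. Unset Printing Implicit Defensive.
Import Order.TTheory GRing.Theory Num.Theory.
Local Open Scope ring_scope.

Lemma sum_ffun_prod (R : comPzSemiRingType) (I J : finType) (w : J -> R) :
  \sum_(f : {ffun I -> J}) \prod_i w (f i) = (\sum_j w j) ^+ #|I|.
Proof. by rewrite -(bigA_distr_bigA (fun=> w)) prodr_const. Qed.

Lemma sum_ffun_forall_prod (R : comPzSemiRingType) (I J : finType) (P : pred J)
    (w : J -> R) :
  \sum_(f : {ffun I -> J} | [forall i, P (f i)]) \prod_i w (f i)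
  = (\sum_(j | P j) w j) ^+ #|I|.
Proof.
rewrite [in RHS]big_mkcond -sum_ffun_prod big_mkcond /=.
apply: eq_bigr => f _; case: forallP => [Pf | /forallP/forallPn[i /negbTE nPfi]].
  by apply: eq_bigr => i _; rewrite Pf.
by rewrite (bigD1 i) //= nPfi mul0r.
Qed.

Lemma sum_pair_fst_eq (R : pzSemiRingType) (I J : finType) (a : I)
    (Q : I -> J -> bool) (F : I -> R) (G : J -> R) :
  \sum_(t : I * J | (t.1 == a) && Q t.1 t.2) F t.1 * G t.2
  = F a * \sum_(j | Q a j) G j.
Proof.
rewrite -(pair_big_dep (pred1 a) Q (fun i j => F i * G j)) /=.
by rewrite big_pred1_eq big_distrr.
Qed.

Lemma sum_predC_total (R : pzRingType) (T : finType) (P : pred T) (w : T -> R) :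
  \sum_x w x = 1 -> \sum_(x | ~~ P x) w x = 1 - \sum_(x | P x) w x.
Proof. by move <-; rewrite [in RHS](bigID P) /= addrAC subrr add0r. Qed.

Lemma exprD_binomial_mix (R : comPzRingType) (g a b : R) (n : nat) :
  ((1 - g) * a + g * b) ^+ n
  = \sum_(i < n.+1) 'C(n, i)%:R * g ^+ i * (1 - g) ^+ (n - i) * a ^+ (n - i) * b ^+ i.
Proof.
rewrite exprDn; apply: eq_bigr => i _.
by rewrite !exprMn -mulr_natl; ring.
Qed.

Section ComputationTree.
Variables (dv dc : nat) (R : realFieldType) (gamma : R).
Local Notation V l := (VC dv dc l).1.
Local Notation C l := (VC dv dc l).2.

Lemma bw_sum : bw gamma true + bw gamma false = 1.
Proof. by rewrite /bw addrC subrK. Qed.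

Lemma sum_wts l :
  \sum_(t : V l) wV gamma t = 1 /\ \sum_(g : C l) wC gamma g = 1.
Proof.
elim: l => [|l [sumV sumC]]; split.
- by rewrite big_bool; exact: bw_sum.
- by rewrite big_const card_unit /= addr0.
- change (\sum_(t : bool * {ffun 'I_dv.-1 -> C l}) bw gamma t.1 * \prod_i wC gamma (t.2 i) = 1).
  rewrite -(pair_bigA _ (fun b (f : {ffun 'I_dv.-1 -> C l}) =>
    bw gamma b * \prod_i wC gamma (f i))) big_bool -!big_distrr.
  by rewrite (sum_ffun_prod _ (wC gamma (l:=l))) sumC expr1n /= !mulr1 bw_sum.
- change (\sum_(g : {ffun 'I_dc.-1 -> V l}) \prod_i wV gamma (g i) = 1).
  by rewrite (sum_ffun_prod _ (wV gamma (l:=l))) sumV expr1n.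
Qed.

Lemma sum_wV_xval l b : \sum_(t : V l | xval t == b) wV gamma t = bw gamma b.
Proof.
case: l => [|l]; first exact: big_pred1_eq.
transitivity (\sum_(t : bool * {ffun 'I_dv.-1 -> C l} | (t.1 == b) && true)
               bw gamma t.1 * \prod_i wC gamma (t.2 i)).
  by apply: eq_bigl => t; rewrite andbT.
rewrite (sum_pair_fst_eq b (fun _ _ => true) (bw gamma)
           (fun f : {ffun 'I_dv.-1 -> C l} => \prod_i wC gamma (f i))).
by rewrite (sum_ffun_prod _ (wC gamma (l:=l))) (sum_wts l).2 expr1n mulr1.
Qed.

Lemma sum_wV_xval_vunres l b : bw gamma b != 0 ->
  \sum_(t : V l | (xval t == b) && vunres t) wV gamma t
  = bw gamma b * p_DE dv dc gamma b l.
Proof. by move=> nz_b; rewrite /p_DE sum_wV_xval mulrC divfK. Qed.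

Lemma cresS l b (g : C l.+1) :
  cres b g = [forall i, vunres (g i) ==> (xval (g i) == b)].
Proof.
set U := [set i | vunres (g i)]; set D := [set i in U | xval (g i)].
change (((b + #|D| == 0) || (b + #|D| == 1 + #|U|))%N
        = [forall i, vunres (g i) ==> (xval (g i) == b)]).
have sDU : D \subset U by apply/subsetP => i; rewrite inE => /andP[].
case: b => /=.
- rewrite eqn_add2l (subset_leqif_card sDU).2.
  apply/subsetP/forallP => [sUD i | allD i]; [move: (sUD i) | move: (allD i)];
    by rewrite !inE; case: (vunres _); case: (xval _) => //; apply.
- rewrite add0n [(_ == 1 + _)%N]eqn_leq [(1 + _ <= _)%N]leqNgt ltnS.
  rewrite subset_leq_card // andbF orbF cards_eq0.
  apply/eqP/forallP => [D0 i | allD]; last apply/setP => i.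
    by move/setP/(_ i): D0; rewrite !inE; case: (vunres _); case: (xval _).
  by move: (allD i); rewrite !inE; case: (vunres _); case: (xval _).
Qed.

Lemma p_DE_S l b : bw gamma b != 0 ->
  p_DE dv dc gamma b l.+1 = (1 - q_DE dv dc gamma b l) ^+ dv.-1.
Proof.
move=> nz_b; rewrite /p_DE sum_wV_xval.
change ((\sum_(t : bool * {ffun 'I_dv.-1 -> C l}
                 | (t.1 == b) && [forall i, ~~ cres t.1 (t.2 i)])
           bw gamma t.1 * \prod_i wC gamma (t.2 i)) / bw gamma b
        = (1 - q_DE dv dc gamma b l) ^+ dv.-1).
rewrite (sum_pair_fst_eq b
           (fun b' (f : {ffun 'I_dv.-1 -> C l}) => [forall i, ~~ cres b' (f i)])
           (bw gamma) (fun f => \prod_i wC gamma (f i))).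
rewrite mulrC mulKf //.
rewrite (sum_ffun_forall_prod _ (fun c : C l => ~~ cres b c) (wC gamma (l:=l))).
by rewrite card_ord sum_predC_total ?(sum_wts l).2.
Qed.

Lemma q_DE_S l b : bw gamma (~~ b) != 0 ->
  q_DE dv dc gamma b l.+1
  = (1 - bw gamma (~~ b) * p_DE dv dc gamma (~~ b) l) ^+ dc.-1.
Proof.
move=> nz_nb.
change (\sum_(g : {ffun 'I_dc.-1 -> V l} | cres (l := l.+1) b g)
          \prod_i wV gamma (g i)
        = (1 - bw gamma (~~ b) * p_DE dv dc gamma (~~ b) l) ^+ dc.-1).
under eq_bigl do rewrite cresS.
rewrite (sum_ffun_forall_prod _ (fun t : V l => vunres t ==> (xval t == b))
           (wV gamma (l:=l))).
rewrite card_ord -sum_wV_xval_vunres // -sum_predC_total ?(sum_wts l).1 //.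
congr (_ ^+ _); apply: eq_bigl => t.
by case: (vunres t) (xval t) (b) => [] [] [].
Qed.

End ComputationTree.

Theorem proposition1 (R : realFieldType) (gamma : R) (dv dc : nat)
  (hgamma : 0 < gamma < 1) (hdv : (0 < dv)%N) (hdc : (0 < dc)%N) (l : nat) :
  let p0 := p_DE dv dc gamma false in
  let p1 := p_DE dv dc gamma true in
  let q0 := q_DE dv dc gamma false in
  let q1 := q_DE dv dc gamma true in
  [/\ q0 l.+1 = \sum_(i < dc.-1.+1)
                  'C(dc.-1, i)%:R * gamma ^+ i * (1 - gamma) ^+ (dc.-1 - i)
                  * (1 - p1 l) ^+ i,
      q1 l.+1 = \sum_(i < dc.-1.+1)
                  'C(dc.-1, i)%:R * gamma ^+ i * (1 - gamma) ^+ (dc.-1 - i)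
                  * (1 - p0 l) ^+ (dc.-1 - i),
      p0 l.+1 = (1 - q0 l) ^+ dv.-1
    & p1 l.+1 = (1 - q1 l) ^+ dv.-1].
Proof.
move=> p0 p1 q0 q1; case/andP: hgamma => gamma_gt0 gamma_lt1.
have nz_true : bw gamma true != 0 by rewrite lt0r_neq0.
have nz_false : bw gamma false != 0 by rewrite lt0r_neq0 // subr_gt0.
split; [| | exact: p_DE_S | exact: p_DE_S].
- rewrite /q0 q_DE_S //= (_ : 1 - _ = (1 - gamma) * 1 + gamma * (1 - p1 l)).
    by rewrite exprD_binomial_mix; apply: eq_bigr => i _; rewrite expr1n mulr1.
  by rewrite /p1; ring.
- rewrite /q1 q_DE_S //= (_ : 1 - _ = (1 - gamma) * (1 - p0 l) + gamma * 1).
    by rewrite exprD_binomial_mix; apply: eq_bigr => i _; rewrite expr1n mulr1.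
  by rewrite /p0; ring.
Qed.
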